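(* Let $S$ be a poset and let $S\otimes_i G_i$ and $S\otimes_i H_i$ be terminating ordered joins in the same shape $S$. Suppose $i_0\in S$ is a maximal element of $S$ and $G_i=H_i$ for all $i\neq i_0$. If $G_{i_0}\simeq_0 H_{i_0}$, then $S\otimes_i G_i \simeq_0 S\otimes_i H_i$.
   Context: All games are impartial combinatorial games under normal play; a game is determined by its set of options, and $G \to G'$ means $G'$ is an option of $G$. A game is terminating if it admits no infinite sequence of moves. $\mathbf{0}$ denotes the game with no options. The Grundy number of a terminating game $G$ is the ordinal $\Gamma_0(G)=\operatorname{mex}\{\Gamma_0(G') : G\to G'\}$, where $\operatorname{mex}\Lambda$ is the least ordinal not in the set of ordinals $\Lambda$. Games $G,H$ are $0$-equivalent, $G\simeq_0 H$, if $\Gamma_0(G)=\Gamma_0(H)$. Ordered join: for a poset $S$ and a family $(G_i)_{i\in S}$ of games, $S \otimes_i G_i$ is the game whose options are exactly the ordered joins $S \otimes_i G'_i$ obtained by choosing one $i_0\in S$ and an option $G_{i_0}\to G'_{i_0}$, and setting $G'_i=\mathbf{0}$ for all $i>i_0$ and $G'_i=G_i$ for all other $i\ne i_0$. *)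

From Stdlib Require Import ClassicalEpsilon.
From mathcomp Require Import all_boot all_order.

Unset Strict Implicit.
Unset Printing Implicit Defensive.

(* A (possibly non-terminating) impartial game: a family of options. *)
CoInductive game : Type := Game { gidx : Type ; gopt : gidx -> game }.

Definition is_option (G G' : game) : Prop := exists k : gidx G, gopt G k = G'.

(* A game is determined by its set of options: identity of games is
   (coinductive) extensional equality, i.e. bisimilarity. *)
CoInductive game_eq (G H : game) : Prop :=
  GameEq : (forall k, exists l, game_eq (gopt G k) (gopt H l)) ->
           (forall l, exists k, game_eq (gopt G k) (gopt H l)) ->
           game_eq G H.

Definition gzero : game := @Game Empty_set (fun e => match e with end).

Definition terminating (G : game) : Prop :=
  ~ exists s : nat -> game, s 0 = G /\ forall n, is_option (s n) (s n.+1).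

(* ---------- Ordinals (as well-founded trees compared by rank) ---------- *)
Inductive Ord : Type := OSup { oidx : Type ; oval : oidx -> Ord }.

Fixpoint ole (a b : Ord) {struct a} : Prop :=
  match a, b with
  | OSup _ f, OSup _ g => forall i, exists j, ole (f i) (g j)
  end.

Definition olt (a b : Ord) : Prop :=
  match b with OSup _ g => exists j, ole a (g j) end.

Definition oeq (a b : Ord) : Prop := ole a b /\ ole b a.

Definition ozero : Ord := @OSup Empty_set (fun e => match e with end).

Definition is_mex {I : Type} (f : I -> Ord) (alpha : Ord) : Prop :=
  (forall i, ~ oeq (f i) alpha) /\
  (forall beta, olt beta alpha -> exists i, oeq (f i) beta).

Definition mex {I : Type} (f : I -> Ord) : Ord :=
  epsilon (inhabits ozero) (is_mex f).

Definition opt_rel (G' G : game) : Prop := is_option G G'.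

Definition Gamma0_acc {G : game} (h : Acc opt_rel G) : Ord :=
  Fix_F (fun _ => Ord)
    (fun G rec => mex (fun k : gidx G => rec (gopt G k) (ex_intro _ k erefl))) h.

(* Defined for terminating (well-founded) games; junk value otherwise. *)
Definition Gamma0 (G : game) : Ord :=
  match excluded_middle_informative (Acc opt_rel G) with
  | left h => Gamma0_acc h
  | right _ => ozero
  end.

Definition zero_equiv (G H : game) : Prop := oeq (Gamma0 G) (Gamma0 H).

CoFixpoint ojoin {disp : Order.disp_t} {S : porderType disp} (G : S -> game) : game :=
  @Game {i : S & gidx (G i)}
    (fun p => ojoin (fun j =>
        if (projT1 p < j)%O then gzero
        else if j == projT1 p then gopt (G (projT1 p)) (projT2 p)
        else G j)).

(* Call two families K, L equivalent off i0 if K i = L i for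
   i <> i0 and K i0, L i0 have the same Grundy number.  Grundy numbers of
   terminating games X, Y coincide as soon as no option of X has the Grundy
   number of Y and vice versa (mex criterion).  For joins of equivalent
   families we show, by well-founded induction on pairs of positions, that no
   option of ojoin K has the Grundy number of ojoin L:
   - a move in a component j <> i0 is copied in L, giving equivalent
     families again;
   - a move K i0 -> x with Gamma x < Gamma (K i0) is answered in L i0 by an
     option of the same Grundy number;
   - a move K i0 -> x with Gamma x > Gamma (K i0) is reversed by an option
     of x with Grundy number Gamma (K i0), giving a family equivalent to L.
   Maximality of i0 ensures a move at i0 never zeroes other components. *)

From mathcomp Require Import all_boot all_order.
From Stdlib Require Import Classical ClassicalEpsilon ProofIrrelevance.
From Stdlib Require Import FunctionalExtensionality Relations Wellfounded.
Import Order.TTheory.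

(** * Comparison of ordinals *)

Lemma ole_refl a : ole a a.
Proof. by elim: a => I f IH /= i; exists i. Qed.

Lemma ole_trans {a b c} : ole a b -> ole b c -> ole a c.
Proof.
elim: a b c => I f IH [J g] [K h] /= hab hbc i.
have [j hj] := hab i; have [k hk] := hbc j.
by exists k; apply: IH hj hk.
Qed.

Lemma olt_ole_trans {a b c} : olt a b -> ole b c -> olt a c.
Proof.
case: b c => J g [K h] /= [j hj] hbc.
by have [k hk] := hbc j; exists k; apply: ole_trans hj hk.
Qed.

Lemma ole_olt_trans {a b c} : ole a b -> olt b c -> olt a c.
Proof. by case: c => K h /= hab [k hk]; exists k; apply: ole_trans hab hk. Qed.

Lemma olt_sup {I} (g : I -> Ord) j : olt (g j) (OSup I g).
Proof. by exists j; apply: ole_refl. Qed.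

Lemma ole_sup {I} (g : I -> Ord) c : (forall j, olt (g j) c) -> ole (OSup I g) c.
Proof. by case: c. Qed.

Lemma ole_not_gt {a b} : ole a b -> ~ olt b a.
Proof.
elim: a b => I f IH [J g] hab [i hi].
have [j hj] := hab i.
by apply: (IH i (g j) hj); apply: olt_ole_trans (olt_sup g j) hi.
Qed.

Lemma olt_irrefl a : ~ olt a a.
Proof. exact: ole_not_gt (ole_refl a). Qed.

Lemma ole_or_gt a b : ole a b \/ olt b a.
Proof.
elim: a b => I f IH [J g].
have [hle | nle] := classic (forall i, exists j, ole (f i) (g j)); first by left.
have [i hi] := not_all_ex_not _ _ nle.
right; exists i; apply: ole_sup => j.
by have [hij | //] := IH i (g j); case: hi; exists j.
Qed.

Lemma ord_trichotomy a b : olt a b \/ oeq a b \/ olt b a.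
Proof.
case: (ole_or_gt a b) => [hab | hba]; last by right; right.
by case: (ole_or_gt b a) => [hba | hab']; [right; left | left].
Qed.

Lemma oeq_sym {a b} : oeq a b -> oeq b a.
Proof. by case. Qed.

Lemma oeq_trans {a b c} : oeq a b -> oeq b c -> oeq a c.
Proof. by move=> [h1 h2] [h3 h4]; split; apply: ole_trans; eassumption. Qed.

Lemma olt_oeq_trans {a b c} : olt a b -> oeq b c -> olt a c.
Proof. by move=> hab [hbc _]; apply: olt_ole_trans hab hbc. Qed.

(** * The minimal excludant *)

(* The mex is the supremum of those values f i all of whose predecessors
   are attained by f. *)
Lemma mex_exists {I} (f : I -> Ord) : exists a, is_mex f a.
Proof.
pose closed i := forall b, olt b (f i) -> exists k, oeq (f k) b.
pose a := OSup {i | closed i} (fun s => f (proj1_sig s)).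
have attained : forall b, olt b a -> exists k, oeq (f k) b.
  move=> b [[i hi] /= hb].
  case: (ord_trichotomy b (f i)) => [lt_bf | [eq_bf | lt_fb]].
  - exact: hi.
  - by exists i; apply: oeq_sym.
  - by case: (ole_not_gt hb lt_fb).
exists a; split=> // k [le_fa le_af].
have hk : closed k by move=> b hb; apply: attained; apply: olt_ole_trans hb le_fa.
by apply: (olt_irrefl a); apply: ole_olt_trans le_af (olt_sup _ (exist _ k hk)).
Qed.

Lemma mex_spec {I} (f : I -> Ord) : is_mex f (mex f).
Proof. exact: epsilon_spec (mex_exists f). Qed.

(** * Grundy numbers *)

Lemma grundy_unfold G :
  Acc opt_rel G -> Gamma0 G = mex (fun k => Gamma0 (gopt G k)).
Proof.
move=> accG; rewrite {1}/Gamma0.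
case: excluded_middle_informative => [[acc_opt] | //].
rewrite /Gamma0_acc /=; congr mex; apply: functional_extensionality_dep => k.
rewrite /Gamma0; case: excluded_middle_informative => [h | nacc].
  by rewrite /Gamma0_acc; congr Fix_F; apply: proof_irrelevance.
by case: nacc; apply: acc_opt; exists k.
Qed.

Lemma grundy_is_mex G :
  Acc opt_rel G -> is_mex (fun k => Gamma0 (gopt G k)) (Gamma0 G).
Proof. by move=> accG; rewrite grundy_unfold //; apply: mex_spec. Qed.

Lemma grundy_option_neq {G G'} : Acc opt_rel G -> is_option G G' -> ~ zero_equiv G' G.
Proof. by move=> /grundy_is_mex [neq _] [k <-]; apply: neq. Qed.

Lemma grundy_option_below {G b} :
  Acc opt_rel G -> olt b (Gamma0 G) -> exists k, oeq (Gamma0 (gopt G k)) b.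
Proof. by move=> /grundy_is_mex [_ below]; apply: below. Qed.

Lemma equiv_option_neq {G H H'} :
  Acc opt_rel H -> is_option H H' -> zero_equiv G H' -> ~ zero_equiv G H.
Proof.
move=> accH optH eGH' eGH; apply: (grundy_option_neq accH optH).
exact: oeq_trans (oeq_sym eGH') eGH.
Qed.

Lemma zero_equiv_of_no_option G H :
  Acc opt_rel G -> Acc opt_rel H ->
  (forall k, ~ zero_equiv (gopt G k) H) ->
  (forall l, ~ zero_equiv (gopt H l) G) ->
  zero_equiv G H.
Proof.
move=> accG accH missG missH.
case: (ord_trichotomy (Gamma0 G) (Gamma0 H)) => [lt_GH | [// | lt_HG]].
  by have [l hl] := grundy_option_below accH lt_GH; case: (missH l).
by have [k hk] := grundy_option_below accG lt_HG; case: (missG k).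
Qed.

(** * Termination and induction on pairs of positions *)

Lemma terminating_acc G : terminating G -> Acc opt_rel G.
Proof.
move=> term; apply: NNPP => nacc; apply: term.
have step (X : {Y | ~ Acc opt_rel Y}) :
    {Z : {Y | ~ Acc opt_rel Y} | is_option (proj1_sig X) (proj1_sig Z)}.
  apply: constructive_indefinite_description; case: X => X nX /=.
  apply: NNPP => none; apply: nX; constructor=> Y hY.
  by apply: NNPP => nY; apply: none; exists (exist _ Y nY).
exists (fun n => proj1_sig (iter n (fun X => proj1_sig (step X)) (exist _ G nacc))).
by split=> // n; apply: (proj2_sig (step _)).
Qed.

Notation descendant := (clos_trans game opt_rel).

Lemma acc_of_acc_descendant X : Acc descendant X -> Acc opt_rel X.
Proof. by apply: Acc_incl => Y Z; apply: t_step. Qed.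

Section PairInduction.
Context {A : Type} (R : A -> A -> Prop).

Definition pair_below (x' y' x y : A) : Prop :=
  (R x' x /\ (y' = y \/ R y' y)) \/ ((x' = x \/ R x' x) /\ R y' y).

Lemma pair_below_sym x' y' x y : pair_below x' y' x y -> pair_below y' x' y x.
Proof. by rewrite /pair_below; tauto. Qed.

Lemma pair_ind (P : A -> A -> Prop) :
  (forall x y, Acc R x -> Acc R y ->
     (forall x' y', pair_below x' y' x y -> P x' y') -> P x y) ->
  forall x y, Acc R x -> Acc R y -> P x y.
Proof.
move=> step x y accx; elim: accx y => {}x accx IHx y accy.
elim: accy => {}y accy IHy.
apply: (step x y (Acc_intro _ accx) (Acc_intro _ accy)) => x' y' [[hx hy] | [hx hy]].
  apply: (IHx _ hx); case: hy => [-> | hy]; [exact: Acc_intro | exact: accy].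
case: hx => [-> | hx]; first exact: IHy.
exact: (IHx _ hx _ (accy _ hy)).
Qed.

End PairInduction.

(** * Moves in ordered joins *)

Lemma game_eq_sym : forall G H, game_eq G H -> game_eq H G.
Proof.
cofix CIH; move=> G H [fw bw]; constructor.
- by move=> l; case: (bw l) => k hk; exists k; apply: CIH.
- by move=> k; case: (fw k) => l hl; exists l; apply: CIH.
Qed.

Lemma game_eq_gzero : game_eq gzero gzero.
Proof. by constructor=> -[]. Qed.

Section OrderedJoin.
Context {disp : Order.disp_t} {S : porderType disp}.
Implicit Types (K L : S -> game) (i j : S) (y z : game).

Definition after_move (K : S -> game) (j : S) (y : game) : S -> game :=
  fun l => if (j < l)%O then gzero else if l == j then y else K l.

Lemma after_move_self K j y : after_move K j y j = y.
Proof. by rewrite /after_move ltxx eqxx. Qed.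

Lemma ojoin_move_option {K j y} (m : gidx y) :
  K j = y -> is_option (ojoin K) (ojoin (after_move K j (gopt y m))).
Proof. by move=> eKy; subst y; exists (existT _ j m). Qed.

Lemma ojoin_move_descendant {K j y} (m : gidx y) :
  K j = y -> descendant (ojoin (after_move K j (gopt y m))) (ojoin K).
Proof. by move=> eKy; apply/t_step/ojoin_move_option. Qed.

Lemma acc_component K j : Acc opt_rel (ojoin K) -> Acc opt_rel (K j).
Proof.
suff gen X : Acc opt_rel X -> forall M, X = ojoin M -> Acc opt_rel (M j).
  by move=> accK; apply: gen accK K erefl.
elim=> {}X _ IH M eX; rewrite {}eX in IH.
constructor=> _ [k <-]; rewrite -(after_move_self M j (gopt (M j) k)).
by apply: (IH _ _ _ erefl); exists (existT _ j k).
Qed.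

Context {i0 : S} (i0_max : forall j : S, ~~ (i0 < j)%O).

Definition agree_off (K L : S -> game) : Prop :=
  forall i, i != i0 -> game_eq (K i) (L i).

Definition equiv_off (K L : S -> game) : Prop :=
  agree_off K L /\ zero_equiv (K i0) (L i0).

Lemma equiv_off_sym K L : equiv_off K L -> equiv_off L K.
Proof.
by move=> [hoff h0]; split; [move=> i hi; apply/game_eq_sym/hoff | apply: oeq_sym].
Qed.

Lemma after_move_max_off K y i : i != i0 -> after_move K i0 y i = K i.
Proof. by move=> hi; rewrite /after_move (negbTE (i0_max i)) (negbTE hi). Qed.

Lemma agree_off_move_max K L y : agree_off K L -> agree_off (after_move K i0 y) L.
Proof. by move=> hoff i hi; rewrite after_move_max_off //; apply: hoff. Qed.

Lemma equiv_off_move_max K L y z :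
  agree_off K L -> zero_equiv y z -> equiv_off (after_move K i0 y) (after_move L i0 z).
Proof.
move=> hoff hyz; split; last by rewrite !after_move_self.
by move=> i hi; rewrite !after_move_max_off //; apply: hoff.
Qed.

Lemma equiv_off_move_other K L j y z :
  equiv_off K L -> j != i0 -> game_eq y z ->
  equiv_off (after_move K j y) (after_move L j z).
Proof.
move=> [hoff h0] hj hyz; split; last first.
  by rewrite /after_move eq_sym (negbTE hj); case: (j < i0)%O => //; split; apply: ole_refl.
move=> i hi; rewrite /after_move; case: (j < i)%O; first exact: game_eq_gzero.
by case: (i == j) => //; apply: hoff.
Qed.

(* The induction hypothesis of the main argument at the pair (K, L). *)
Definition smaller_pairs_equiv (K L : S -> game) : Prop :=
  forall K' L', pair_below descendant (ojoin K') (ojoin L') (ojoin K) (ojoin L) ->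
  equiv_off K' L' -> zero_equiv (ojoin K') (ojoin L').

Lemma smaller_pairs_equiv_sym K L : smaller_pairs_equiv K L -> smaller_pairs_equiv L K.
Proof.
move=> IH K' L' below eqKL; apply: oeq_sym.
by apply: IH; [apply: pair_below_sym | apply: equiv_off_sym].
Qed.

Section NoOptionHits.
Variables (K L : S -> game).
Hypotheses (accK : Acc opt_rel (ojoin K)) (accL : Acc opt_rel (ojoin L)).
Hypotheses (eqKL : equiv_off K L) (IH : smaller_pairs_equiv K L).

(* A move off i0 is copied in L. *)
Lemma move_off_max_misses j (k : gidx (K j)) :
  j != i0 -> ~ zero_equiv (ojoin (after_move K j (gopt (K j) k))) (ojoin L).
Proof.
move=> hj hit; have [fw _] := eqKL.1 j hj; have [l hl] := fw k.
apply: (equiv_option_neq accL (ojoin_move_option (K := L) l erefl) _ hit).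
apply: IH; last exact: equiv_off_move_other.
by left; split; [|right]; apply: ojoin_move_descendant.
Qed.

(* A move K i0 -> x is answered in L i0 if it lowers the Grundy number, and
   reversed inside x if it raises it. *)
Lemma move_at_max_misses (k : gidx (K i0)) :
  ~ zero_equiv (ojoin (after_move K i0 (gopt (K i0) k))) (ojoin L).
Proof.
move=> hit; set x := gopt (K i0) k in hit *.
have accK0 := acc_component K i0 accK; have accL0 := acc_component L i0 accL.
case: (ord_trichotomy (Gamma0 x) (Gamma0 (K i0))) => [lt_x | [eq_x | gt_x]].
- have [l hl] := grundy_option_below accL0 (olt_oeq_trans lt_x eqKL.2).
  apply: (equiv_option_neq accL (ojoin_move_option (K := L) l erefl) _ hit).
  apply: IH; last exact: equiv_off_move_max eqKL.1 (oeq_sym hl).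
  by left; split; [|right]; apply: ojoin_move_descendant.
- by apply: (grundy_option_neq accK0 _ eq_x); exists k.
- have accx : Acc opt_rel x by apply: (Acc_inv accK0); exists k.
  have [m hm] := grundy_option_below accx gt_x.
  set K' := after_move K i0 x.
  have optK' := ojoin_move_option m (after_move_self K i0 x).
  have e_back : zero_equiv (ojoin (after_move K' i0 (gopt x m))) (ojoin L).
    apply: IH.
      left; split; last by left.
      apply: (t_trans _ _ _ (ojoin K')); first exact: t_step.
      exact: ojoin_move_descendant.
    split; first by apply/agree_off_move_max/agree_off_move_max; exact: eqKL.1.
    by rewrite after_move_self; apply: oeq_trans hm eqKL.2.
  have accK' : Acc opt_rel (ojoin K') by apply: (Acc_inv accK); apply: ojoin_move_option.
  exact: (grundy_option_neq accK' optK') (oeq_trans e_back (oeq_sym hit)).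
Qed.

Lemma join_option_misses p : ~ zero_equiv (gopt (ojoin K) p) (ojoin L).
Proof.
case: p => j k; case: (eqVneq j i0) => [ej | hj]; last exact: move_off_max_misses.
by subst j; apply: move_at_max_misses.
Qed.

End NoOptionHits.

Lemma ojoin_equiv K L :
  Acc opt_rel (ojoin K) -> Acc opt_rel (ojoin L) -> equiv_off K L ->
  zero_equiv (ojoin K) (ojoin L).
Proof.
pose P X Y := forall M N, X = ojoin M -> Y = ojoin N -> equiv_off M N -> zero_equiv X Y.
suff step X Y : Acc descendant X -> Acc descendant Y ->
    (forall X' Y', pair_below descendant X' Y' X Y -> P X' Y') -> P X Y.
  move=> accK accL eqKL.
  have accKt := Acc_clos_trans _ _ _ accK; have accLt := Acc_clos_trans _ _ _ accL.
  exact: (pair_ind descendant P step _ _ accKt accLt) K L erefl erefl eqKL.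
move=> /acc_of_acc_descendant accX /acc_of_acc_descendant accY IH M N eX eY eqMN.
subst X Y; have IHMN : smaller_pairs_equiv M N by move=> M' N' below; apply: (IH _ _ below).
apply: zero_equiv_of_no_option => //; first exact: join_option_misses.
apply: join_option_misses => //; first exact: equiv_off_sym.
exact: smaller_pairs_equiv_sym.
Qed.

End OrderedJoin.

Theorem mainTheorem3 (disp : Order.disp_t) (S : porderType disp)
  (G H : S -> game) (i0 : S) :
  terminating (ojoin G) -> terminating (ojoin H) ->
  (forall j : S, ~~ (i0 < j)%O) ->
  (forall i : S, i != i0 -> game_eq (G i) (H i)) ->
  zero_equiv (G i0) (H i0) ->
  zero_equiv (ojoin G) (ojoin H).
Proof.
move=> termG termH i0_max agreeGH equivGH.
apply: (ojoin_equiv i0_max); [exact: terminating_acc | exact: terminating_acc |].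
by split.
Qed.
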